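(* Every binary Belov code (as defined in the context) is not self-orthogonal.
   Context: Let $S_k$ be the $k\times(2^k-1)$ binary matrix whose columns are all nonzero vectors of $\mathbb{F}_2^k$, and for an integer $s\ge1$ let $sS_k$ be the $k\times s(2^k-1)$ matrix consisting of $s$ copies of $S_k$ placed side by side. For a subspace $V$ of $\mathbb{F}_2^k$ write $V^*=V\setminus\{0\}$. A binary Belov code is defined as follows. Let $s\ge 1$, $t\ge 0$ and integers $u_1>u_2>\cdots>u_t>u\ge 3$ with $k>u_1$ (and $k\ge u+1$ if $t=0$). Let $V_1,\dots,V_t$ be subspaces of $\mathbb{F}_2^k$ with $\dim V_i=u_i$, let $W$ be a subspace of dimension $u+1$, and let $T\subseteq W^*$ be a set of $u+2$ vectors which spans a space of dimension $u+1$ and whose sum is $0$. Let $R$ be either empty or a single nonzero vector of $\mathbb{F}_2^k$. Let $G'$ be the matrix whose columns are the vectors of $V_1^*,\dots,V_t^*$, of $W^*\setminus T$, and of $R$ (listed with multiplicity), and suppose that every nonzero vector of $\mathbb{F}_2^k$ occurs at most $s$ times among the columns of $G'$, so that $G'$ can be regarded as a submatrix of $sS_k$. Let $G$ be the matrix obtained from $sS_k$ by deleting the columns of $G'$ (with multiplicity), and assume $G$ has rank $k$. The binary code generated by $G$ is called a Belov code. A binary code is self-orthogonal if $C\subseteq C^\perp$. *)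

From HB Require Import structures.
From mathcomp Require Import all_boot all_order all_algebra.
Set Implicit Arguments.
Unset Strict Implicit.
Unset Printing Implicit Defensive.
Import GRing.Theory.
Local Open Scope ring_scope.

(* Binary vectors of F_2^k are column vectors 'cV['F_2]_k; a binary linear
   code with generator matrix G : 'M['F_2]_(m, n) is the row space of G
   (a subspace of 'rV['F_2]_n). *)

Definition in_code (m n : nat) (G : 'M['F_2]_(m, n)) (x : 'rV['F_2]_n) : Prop :=
  (x <= G)%MS.

Definition in_dual_code (m n : nat) (G : 'M['F_2]_(m, n)) (y : 'rV['F_2]_n) : Prop :=
  forall x : 'rV['F_2]_n, in_code G x -> x *m y^T = 0.

Definition self_orthogonal (m n : nat) (G : 'M['F_2]_(m, n)) : Prop :=
  forall x : 'rV['F_2]_n, in_code G x -> in_dual_code G x.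

Definition col_mult (k n : nat) (G : 'M['F_2]_(k, n)) (v : 'cV['F_2]_k) : nat :=
  #|[set j : 'I_n | col j G == v]|.

(* multiplicity of v among the columns of G' (vectors of V_1^*,...,V_t^*,
   of W^* \ T and of R) *)
Definition belov_removed_mult (k t : nat) (V : 'I_t -> {vspace 'cV['F_2]_k})
    (W : {vspace 'cV['F_2]_k}) (T : {set 'cV['F_2]_k})
    (R : option 'cV['F_2]_k) (v : 'cV['F_2]_k) : nat :=
  (\sum_(i < t) nat_of_bool ((v \in V i) && (v != 0%R))
   + nat_of_bool ((v \in W) && (v != 0%R) && (v \notin T))
   + nat_of_bool (R == Some v))%N.

From HB Require Import structures.
From mathcomp Require Import all_boot all_order all_algebra.
Import GRing.Theory.
Local Open Scope ring_scope.

(* For row vectors a, b, the codewords aG and bG are orthogonal iff the sum of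
   (a v)(b v) over the columns v of G vanishes.  Over F_2 the function
   v |-> (a v)(b v) sums to 0 on every subspace U of dimension >= 3: a and b
   both vanish at some nonzero w in U, and v |-> v + w pairs up the vectors of
   U with equal values.  Since G consists of s copies of every nonzero vector
   minus the columns coming from the V_i^*, W^* \ T and R, self-orthogonality
   would force sum_(x in T) (a x)(b x) to equal (a r)(b r) if R = {r}, and 0 if
   R is empty, for all a and b.  In the first case take a = b = e_i with
   r_i = 1: the left side is the i-th coordinate of sum T = 0.  In the second,
   T minus one vector t0 is a basis X with t0 = sum X, and for a, b dual to two
   distinct vectors of X the left side is (a t0)(b t0) = 1. *)

Lemma F2_neq0 (x : 'F_2) : x != 0 -> x = 1.
Proof. by case: x => [[|[|m]] //= lt_x2] _; apply/val_inj. Qed.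

Lemma F2_pchar : 2 \in [pchar 'F_2].
Proof. exact: pchar_Fp. Qed.

Lemma F2_mulxx (x : 'F_2) : x * x = x.
Proof. by have [->|/F2_neq0 ->] := eqVneq x 0; rewrite ?mul0r ?mul1r. Qed.

Lemma sum_subspace_periodic {k} {U : {vspace 'cV['F_2]_k}} {w : 'cV['F_2]_k}
    (f : 'cV['F_2]_k -> 'F_2) :
  w \in U -> w != 0 -> (forall v, f (v + w) = f v) -> \sum_(v in U) f v = 0.
Proof.
move=> wU /matrix0Pn[i [j]]; rewrite [j]ord1 => /F2_neq0 wi1 fw.
have addxx := addrr_pchar2 F2_pchar.
rewrite (bigID (fun v : 'cV['F_2]_k => v i 0 == 0)) /=.
rewrite [X in _ + X](reindex_inj (addIr w)) /=.
rewrite [X in _ + X](eq_big (fun v => (v \in U) && (v i 0 == 0)) f) ?addxx //.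
move=> v; rewrite rpredDr // mxE wi1; congr andb.
by have [->|/F2_neq0 ->] := eqVneq (v i 0) 0; rewrite ?add0r ?addxx ?eqxx ?oner_eq0.
Qed.

Definition prod_form {k} (a b : 'rV['F_2]_k) (v : 'cV['F_2]_k) : 'F_2 :=
  (a *m v) 0 0 * (b *m v) 0 0.

Lemma prod_form0 {k} (a b : 'rV['F_2]_k) : prod_form a b 0 = 0.
Proof. by rewrite /prod_form !mulmx0 !mxE mul0r. Qed.

Lemma prod_form_delta {k} (i : 'I_k) (v : 'cV['F_2]_k) :
  prod_form (delta_mx 0 i) (delta_mx 0 i) v = v i 0.
Proof. by rewrite /prod_form -rowE mxE F2_mulxx. Qed.

Lemma sum_prod_form_subspace {k} (a b : 'rV['F_2]_k) (U : {vspace 'cV['F_2]_k}) :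
  (3 <= \dim U)%N -> \sum_(v in U) prod_form a b v = 0.
Proof.
move=> dimU.
pose f := linfun (mulmx (col_mx a b) : 'cV['F_2]_k -> 'cV['F_2]_(1 + 1)).
have dim_fU : (\dim (f @: U) <= 2)%N.
  by rewrite (leq_trans (dimvS (subvf _))) // dimvf dim_matrix.
set w := vpick (U :&: lker f)%VS.
have wnz : w != 0.
  rewrite vpick0 -dimv_eq0 -lt0n -(ltn_add2r (\dim (f @: U))) add0n limg_ker_dim.
  exact: leq_ltn_trans dim_fU dimU.
have := memv_pick (U :&: lker f)%VS; rewrite -/w memv_cap memv_ker lfunE /=.
rewrite mul_col_mx col_mx_eq0 => /and3P[wU /eqP aw /eqP bw].
apply: (sum_subspace_periodic (prod_form a b) wU wnz) => v.
by rewrite /prod_form !mulmxDr aw bw !addr0.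
Qed.

Lemma self_orthogonal_sum_prod_form {k n} {G : 'M['F_2]_(k, n)} (a b : 'rV['F_2]_k) :
  self_orthogonal G -> \sum_(j < n) prod_form a b (col j G) = 0.
Proof.
move=> soG; have := soG (b *m G) (submxMl _ _) (a *m G) (submxMl _ _).
move/matrixP/(_ 0 0); rewrite !mxE; apply: etrans.
apply: eq_bigr => j _; rewrite /prod_form !mxE.
by congr (_ * _); apply: eq_bigr => i _; rewrite !mxE.
Qed.

Lemma sum_cols_col_mult {Z : nmodType} {k n} (G : 'M['F_2]_(k, n))
    (f : 'cV['F_2]_k -> Z) :
  \sum_(j < n) f (col j G) = \sum_v f v *+ col_mult G v.
Proof.
rewrite (partition_big (fun j => col j G) xpredT) //=.
apply: eq_bigr => v _; rewrite /col_mult -sumr_const.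
by apply: eq_big => [j|j /eqP ->]; rewrite ?inE.
Qed.

Section BelovColumns.

Local Set Implicit Arguments.
Local Unset Strict Implicit.

Variables (k t : nat) (V : 'I_t -> {vspace 'cV['F_2]_k}) (W : {vspace 'cV['F_2]_k}).
Variables (T : {set 'cV['F_2]_k}) (R : option 'cV['F_2]_k).
Hypothesis T_sub_W : T \subset [set x | (x \in W) && (x != 0)].

Lemma sum_belov_removed_mult (Z : zmodType) (f : 'cV['F_2]_k -> Z) : f 0 = 0 ->
  \sum_v f v *+ belov_removed_mult V W T R v =
    \sum_i \sum_(v in V i) f v + (\sum_(v in W) f v - \sum_(v in T) f v)
    + (if R is Some r then f r else 0).
Proof.
move=> f0; have drop0 P v : f v *+ (P && (v != 0)) = f v *+ P.
  by case: eqVneq => [->|]; rewrite ?f0 ?mul0rn ?andbT.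
rewrite /belov_removed_mult.
under eq_bigr => v _ do rewrite !mulrnDr -sumrMnr andbAC drop0.
rewrite !big_split /= exchange_big /=; congr (_ + _ + _).
- apply: eq_bigr => i _; rewrite [RHS]big_mkcond; apply: eq_bigr => v _.
  by rewrite drop0 mulrb.
- have sum_WT : \sum_(v in W | v \in T) f v = \sum_(v in T) f v.
    apply: eq_bigl => v; case vT: (v \in T); rewrite ?andbF ?andbT //.
    by have := subsetP T_sub_W v vT; rewrite inE => /andP[].
  rewrite [\sum_(v in W) _](bigID (mem T)) /= sum_WT addrC addrK [RHS]big_mkcond.
  by apply: eq_bigr => v _; rewrite mulrb.
- case: R => [r|]; last by rewrite big1.
  rewrite (bigD1 r) //= eqxx big1 ?addr0 // => v.
  by move=> ne_vr; rewrite (inj_eq Some_inj) eq_sym (negbTE ne_vr).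
Qed.

Variables (s n : nat) (G : 'M['F_2]_(k, n)).
Hypothesis removed_le_s :
  forall v : 'cV['F_2]_k, v != 0 -> (belov_removed_mult V W T R v <= s)%N.
Hypothesis col_multG : forall v : 'cV['F_2]_k,
  col_mult G v = if v == 0 then 0%N else (s - belov_removed_mult V W T R v)%N.

Lemma sum_cols_belov (Z : zmodType) (f : 'cV['F_2]_k -> Z) : f 0 = 0 ->
  \sum_(j < n) f (col j G) =
    (\sum_v f v) *+ s - \sum_v f v *+ belov_removed_mult V W T R v.
Proof.
move=> f0; rewrite sum_cols_col_mult -sumrMnl -sumrB; apply: eq_bigr => v _.
rewrite col_multG; case: eqVneq => [->|/removed_le_s le_s].
  by rewrite f0 !mul0rn subr0.
by rewrite mulrnBr.
Qed.

Lemma self_orthogonal_belov_sum_prod_form (a b : 'rV['F_2]_k) :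
  (3 <= k)%N -> (forall i, 3 <= \dim (V i))%N -> (3 <= \dim W)%N ->
  self_orthogonal G ->
  \sum_(x in T) prod_form a b x = if R is Some r then prod_form a b r else 0.
Proof.
move=> k_ge3 V_ge3 W_ge3 soG.
have sum_all : \sum_v prod_form a b v = 0.
  rewrite -[RHS](sum_prod_form_subspace a b fullv) ?dimvf ?dim_matrix ?mulr1 //.
  by apply: eq_bigl => v; rewrite memvf.
have := self_orthogonal_sum_prod_form a b soG.
rewrite sum_cols_belov ?prod_form0 // sum_belov_removed_mult ?prod_form0 //.
rewrite sum_all mul0rn big1 => [|i _]; last exact: sum_prod_form_subspace.
rewrite sum_prod_form_subspace // !add0r opprD opprK.
by move/eqP; rewrite subr_eq0 => /eqP.
Qed.

End BelovColumns.

Lemma free_dual_row_form {F : fieldType} {k} {X : seq 'cV[F]_k} (j : 'I_(size X)) :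
  free X -> exists a : 'rV[F]_k, forall l : 'I_(size X), (a *m X`_l) 0 0 = (l == j)%:R.
Proof.
move=> freeX; pose a := \row_i coord (in_tuple X) j (delta_mx i 0).
have aE x : (a *m x) 0 0 = coord (in_tuple X) j x.
  rewrite mxE {2}(matrix_sum_delta x) linear_sum /=.
  by apply: eq_bigr => i _; rewrite big_ord1 linearZ /= mxE mulrC [ord0]ord1.
by exists a => l; rewrite aE coord_free.
Qed.

Lemma exists_prod_form_sum_neq0 {k u : nat} {T : {set 'cV['F_2]_k}} :
  (1 <= u)%N -> #|T| = u.+2 -> \dim <<enum T>>%VS = u.+1 -> \sum_(x in T) x = 0 ->
  exists a b : 'rV['F_2]_k, \sum_(x in T) prod_form a b x != 0.
Proof.
move=> u_gt0 cardT dimT sumT.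
have := cardT; rewrite cardE.
case enumT: (enum T) => [|t0 X] //= [sizeX].
move: sumT dimT; rewrite -big_enum enumT big_cons span_cons => /eqP.
rewrite addr_eq0 => /eqP t0E.
have /addv_idPr -> : (<[t0]> <= <<X>>)%VS.
  by rewrite -memvE t0E rpredN big_seq memv_suml // => x /memv_span.
move=> dimX; have freeX : free X by rewrite /free dimX sizeX.
have lt0X : (0 < size X)%N by rewrite sizeX.
have lt1X : (1 < size X)%N by rewrite sizeX ltnS.
pose i0 := Ordinal lt0X; pose i1 := Ordinal lt1X.
have form_t0 (j : 'I_(size X)) (c : 'rV['F_2]_k) :
    (forall l : 'I_(size X), (c *m X`_l) 0 0 = (l == j)%:R) -> (c *m t0) 0 0 = 1.
  move=> cE; rewrite t0E mulmxN (big_nth 0) big_mkord mulmx_sumr mxE summxE.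
  rewrite (bigD1 j) //= cE eqxx big1 ?addr0 => [|l /negbTE]; last by rewrite cE => ->.
  by rewrite (oppr_pchar2 F2_pchar).
have [a aE] := free_dual_row_form i0 freeX.
have [b bE] := free_dual_row_form i1 freeX.
exists a, b; rewrite -big_enum enumT big_cons (big_nth 0) big_mkord big1 => [|l _].
  by rewrite /= addr0 /prod_form (form_t0 _ _ aE) (form_t0 _ _ bE) mulr1 oner_neq0.
rewrite /prod_form aE bE; case: (l =P i0) => [->|]; last by rewrite mul0r.
by rewrite mul1r.
Qed.

Theorem theorem4p2
  (k s t u : nat) (u_ : 'I_t -> nat)
  (V : 'I_t -> {vspace 'cV['F_2]_k}) (W : {vspace 'cV['F_2]_k})
  (T : {set 'cV['F_2]_k}) (R : option 'cV['F_2]_k)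
  (n : nat) (G : 'M['F_2]_(k, n)) :
  (1 <= s)%N ->
  (* u_1 > u_2 > ... > u_t > u >= 3 *)
  (forall i j : 'I_t, (i < j)%N -> (u_ j < u_ i)%N) ->
  (forall i : 'I_t, (u < u_ i)%N) ->
  (3 <= u)%N ->
  (* k > u_1 (if t > 0), k >= u + 1 (if t = 0) *)
  (forall i : 'I_t, (u_ i < k)%N) ->
  (u.+1 <= k)%N ->
  (* subspaces *)
  (forall i : 'I_t, \dim (V i) = u_ i) ->
  \dim W = u.+1 ->
  (* T: u+2 vectors of W^*, spanning a space of dimension u+1, summing to 0 *)
  T \subset [set x | (x \in W) && (x != 0)] ->
  #|T| = u.+2 ->
  \dim <<enum T>>%VS = u.+1 ->
  \sum_(x in T) x = 0 ->
  (* R empty or a single nonzero vector *)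
  R != Some 0 ->
  (* every nonzero vector occurs at most s times among the columns of G' *)
  (forall v : 'cV['F_2]_k, v != 0 -> (belov_removed_mult V W T R v <= s)%N) ->
  (* G = s S_k with the columns of G' deleted (up to column order) *)
  (forall v : 'cV['F_2]_k,
      col_mult G v = if v == 0 then 0%N else (s - belov_removed_mult V W T R v)%N) ->
  \rank G = k ->
  ~ self_orthogonal G.
Proof.
move=> _ _ u_lt_ui u_ge3 _ u_lt_k dimV dimW T_sub_W cardT dimT sumT R_neq0
  removed_le_s col_multG _ soG.
have k_ge3 : (3 <= k)%N by rewrite (leq_trans u_ge3 (ltnW u_lt_k)).
have V_ge3 i : (3 <= \dim (V i))%N by rewrite dimV (leq_trans u_ge3 (ltnW (u_lt_ui i))).
have W_ge3 : (3 <= \dim W)%N by rewrite dimW (leq_trans u_ge3).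
have sumT_prod_form a b := self_orthogonal_belov_sum_prod_form T_sub_W removed_le_s
  col_multG a b k_ge3 V_ge3 W_ge3 soG.
case: R R_neq0 {removed_le_s col_multG} sumT_prod_form => [r|] r_neq0 sumT_prod_form.
  have /matrix0Pn[i [j]] : r != 0 by apply: contraNneq r_neq0 => ->.
  rewrite [j]ord1 => /negP; apply.
  have := sumT_prod_form (delta_mx 0 i) (delta_mx 0 i).
  under eq_bigr do rewrite prod_form_delta.
  by rewrite prod_form_delta -summxE sumT mxE => <-.
have [a [b]] := exists_prod_form_sum_neq0 (ltnW (ltnW u_ge3)) cardT dimT sumT.
by rewrite sumT_prod_form eqxx.
Qed.
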